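(* Let $p$ be a prime and let $a,b,c$ be positive integers with $b>1$, $c\mid p^a-1$, $c$ a primitive divisor of $p^a-1$, and $p-1\mid c$. Put $m=ab$, $n=bc$, $u=\frac{p^a-1}{c}$, and assume $n\mid p^m-1$ and $n$ is a primitive divisor of $p^m-1$; put $k=\frac{p^m-1}{n}$. Let $\mathcal{C}=\mathcal{C}(k,p^m)$ and $\mathcal{C}_0=\mathcal{C}(u,p^a)$. Suppose the distinct weights occurring in $\mathcal{C}_0$ (including $0$) are $w_1,\dots,w_s$ with frequencies $A_{w_i}(\mathcal{C}_0)=m_i$. Then the weights of $\mathcal{C}$ are exactly the numbers $w_{\ell_1,\dots,\ell_s}=\ell_1w_1+\cdots+\ell_sw_s$ with $(\ell_1,\dots,\ell_s)\in\mathbb{N}_0^s$ and $\ell_1+\cdots+\ell_s=b$, and the tuple $(\ell_1,\dots,\ell_s)$ contributes frequency $\binom{b}{\ell_1,\dots,\ell_s}m_1^{\ell_1}\cdots m_s^{\ell_s}$; i.e. for every integer $w$, $$A_w(\mathcal{C})=\sum_{\substack{\ell_1+\cdots+\ell_s=b\\ \ell_1w_1+\cdots+\ell_sw_s=w}}\binom{b}{\ell_1,\dots,\ell_s}m_1^{\ell_1}\cdots m_s^{\ell_s}.$$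
   Context: Let $p$ be prime, $q=p^m$, $\omega$ a primitive element of $\mathbb{F}_q$, $k\mid q-1$, $n=\frac{q-1}{k}$. The irreducible cyclic code $\mathcal{C}(k,q)\subseteq\mathbb{F}_p^n$ consists of the words $c_\gamma=(\mathrm{Tr}_{q/p}(\gamma\,\omega^{ki}))_{i=0}^{n-1}$, $\gamma\in\mathbb{F}_q$. The weight $w(c)$ of a word is its number of nonzero coordinates, and the frequency of a weight is $A_w=\#\{\gamma\in\mathbb{F}_q: w(c_\gamma)=w\}$. A positive integer $d$ is a primitive divisor of $p^m-1$ if $d\mid p^m-1$ and $d\nmid p^t-1$ for all $1\le t<m$. $\binom{b}{\ell_1,\dots,\ell_s}$ is the multinomial coefficient. *)

From HB Require Import structures.
From mathcomp Require Import all_boot all_order all_algebra all_field.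
Set Implicit Arguments. Unset Strict Implicit. Unset Printing Implicit Defensive.
Import GRing.Theory.
Local Open Scope ring_scope.

(* Absolute trace Tr_{q/p} on a field F with q = p^m elements:
   Tr(x) = x + x^p + ... + x^(p^(m-1)); its value lies in the prime
   subfield F_p of F, so we keep it as an element of F. *)
Definition trace (F : finFieldType) (p m : nat) (x : F) : F :=
  \sum_(i < m) x ^+ (p ^ i).

Definition code_len (p m k : nat) : nat := ((p ^ m - 1) %/ k)%N.

Definition cw_weight (F : finFieldType) (p m k : nat) (omega gamma : F) : nat :=
  #|[set i : 'I_(code_len p m k) | trace p m (gamma * omega ^+ (k * i)) != 0]|.

Definition freq (F : finFieldType) (p m k : nat) (omega : F) (w : nat) : nat :=
  #|[set gamma : F | cw_weight p m k omega gamma == w]|.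

Definition primitive_divisor (p m d : nat) : Prop :=
  (d %| p ^ m - 1)%N /\ forall t : nat, (0 < t < m)%N -> ~~ (d %| p ^ t - 1)%N.

Definition multinom (s b : nat) (l : 'I_s -> nat) : nat :=
  (b`! %/ \prod_(i < s) (l i)`!)%N.

(* Let q = p^a, K = {x in F | x^q = x} and theta = omega^k, a primitive
   (bc)-th root of unity, with zeta = theta^b.  Splitting the coordinate index
   of C as j + b i (j < b, i < c) and using Tr_{F/F_p} = Tr_{K/F_p} o Tr_{F/K},
   the weight of c_g in C is the sum over j < b of
   #{i < c | Tr_{K/F_p}(zeta^i Tr_{F/K}(g theta^j)) <> 0}.  A field isomorphism
   psi : K -> F0 sends zeta to a primitive c-th root of unity, so each summand
   is the C0-weight of the word indexed by psi (Tr_{F/K}(g theta^j)).  Because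
   bc is a primitive divisor, theta has b distinct conjugates over K, and a
   Vandermonde argument shows that g |-> (psi (Tr_{F/K}(g theta^j)))_{j<b} is
   injective, hence a bijection F -> F0^b.  So A_w(C) counts the b-tuples over
   F0 whose C0-weights add up to w; grouping the tuples by how many coordinates
   have each weight w_i gives the multinomial formula. *)

From HB Require Import structures.
From mathcomp Require Import all_boot all_order all_algebra all_field.
From mathcomp Require Import zify.

Set Implicit Arguments.
Unset Strict Implicit.
Unset Printing Implicit Defensive.
Import GRing.Theory.

Lemma cards_sum (T : finType) (P : pred T) : #|[set x | P x]| = \sum_(x : T) (P x : nat).
Proof. by rewrite -sum1dep_card big_mkcond; apply: eq_bigr => x _; case: (P x). Qed.

Section Profiles.

Variables (b s : nat).

Definition profile (h : {ffun 'I_b -> 'I_s}) (i : 'I_s) : nat := #|[set j | h j == i]|.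

Lemma sum_profile (h : {ffun 'I_b -> 'I_s}) (W : 'I_s -> nat) :
  \sum_j W (h j) = \sum_i profile h i * W i.
Proof.
rewrite (partition_big h xpredT) //=; apply: eq_bigr => i _.
rewrite (eq_bigr (fun _ => W i)) => [|j /eqP -> //].
by rewrite sum_nat_const /profile cardsE.
Qed.

Lemma prod_profile (h : {ffun 'I_b -> 'I_s}) (M : 'I_s -> nat) :
  \prod_j M (h j) = \prod_i M i ^ profile h i.
Proof.
rewrite (partition_big h xpredT) //=; apply: eq_bigr => i _.
rewrite (eq_bigr (fun _ => M i)) => [|j /eqP -> //].
by rewrite prod_nat_const /profile cardsE.
Qed.

Lemma sum_profile1 (h : {ffun 'I_b -> 'I_s}) : \sum_i profile h i = b.
Proof.
by rewrite -[b]card_ord -sum1_card (sum_profile h (fun=> 1));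
  apply: eq_bigr => i _; rewrite muln1.
Qed.

Lemma profile_le (h : {ffun 'I_b -> 'I_s}) i : profile h i <= b.
Proof. by rewrite -[X in _ <= X](sum_profile1 h) (bigD1 i) //= leq_addr. Qed.

Definition card_profile (l : 'I_s -> nat) : nat :=
  #|[set h : {ffun 'I_b -> 'I_s} | [forall i, profile h i == l i]]|.

End Profiles.

Definition ffun_cons b s (i : 'I_s) (h : {ffun 'I_b -> 'I_s}) : {ffun 'I_b.+1 -> 'I_s} :=
  [ffun j => oapp h i (unlift ord0 j)].

Definition ffun_behead b s (h : {ffun 'I_b.+1 -> 'I_s}) : {ffun 'I_b -> 'I_s} :=
  [ffun j => h (lift ord0 j)].

Lemma ffun_consK b s (h : {ffun 'I_b.+1 -> 'I_s}) : ffun_cons (h ord0) (ffun_behead h) = h.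
Proof.
by apply/ffunP => j; rewrite !ffunE; case: (unliftP ord0 j) => [j'|] -> /=; rewrite ?ffunE.
Qed.

Lemma profile_cons b s i (h : {ffun 'I_b -> 'I_s}) i' :
  profile (ffun_cons i h) i' = (i == i') + profile h i'.
Proof.
rewrite /profile !cards_sum big_ord_recl !ffunE unlift_none /=; congr addn.
by apply: eq_bigr => j _; rewrite ffunE liftK.
Qed.

Lemma card_profileS b s (l : 'I_s -> nat) :
  card_profile b.+1 l = \sum_(i | 0 < l i) card_profile b (fun i' => l i' - (i' == i)).
Proof.
rewrite /card_profile cards_sum.
rewrite (reindex (fun pr : 'I_s * {ffun 'I_b -> 'I_s} => ffun_cons pr.1 pr.2)) /=; last first.
  exists (fun h : {ffun 'I_b.+1 -> 'I_s} => (h ord0, ffun_behead h)) => [[i h] _|h _].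
    congr pair; first by rewrite ffunE unlift_none.
    by apply/ffunP => j; rewrite !ffunE liftK.
  exact: ffun_consK.
rewrite -(pair_big xpredT xpredT
  (fun i h => [forall i', profile (ffun_cons i h) i' == l i'] : nat)).
rewrite [RHS]big_mkcond /=; apply: eq_bigr => i _; rewrite cards_sum.
have [li|] := ifP; last first.
  move=> li0; rewrite big1 // => h _; apply/eqP; rewrite eqb0.
  by apply/forallP => /(_ i); rewrite profile_cons eqxx => /eqP E; rewrite -E in li0.
apply: eq_bigr => h _; congr nat_of_bool; apply: eq_forallb => i'.
rewrite profile_cons; have [<-|_] := eqVneq i i'; last by rewrite subn0.
by apply/eqP/eqP; lia.
Qed.

Lemma card_profile_fact b s (l : 'I_s -> nat) :
  \sum_i l i = b -> card_profile b l * \prod_i (l i)`! = b`!.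
Proof.
elim: b l => [|b IH] l l_sum.
  have l0 i : l i = 0 by move/eqP: l_sum; rewrite sum_nat_eq0 => /forallP/(_ i)/eqP.
  rewrite big1 ?muln1 => [|i _]; last by rewrite l0.
  rewrite /card_profile (_ : [set h | _] = setT) ?cardsT ?card_ffun ?card_ord //.
  apply/setP => h; rewrite !inE; apply/forallP => i; rewrite l0 /profile.
  by rewrite cards_eq0; apply/eqP/setP => -[].
rewrite card_profileS big_distrl /= factS -l_sum big_distrl /=.
rewrite [RHS](bigID (fun i => 0 < l i)) /= [X in _ = _ + X]big1 ?addn0 => [|i]; last first.
  by rewrite -eqn0Ngt => /eqP ->.
apply: eq_bigr => i li; set l' := fun i' => _.
have l'E j : j != i -> l' j = l j by rewrite /l' => /negbTE ->; rewrite subn0.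
have l'_sum : \sum_i l' i = b.
  move: l_sum; rewrite (bigD1 i) // [in X in _ -> X](bigD1 i) //=.
  rewrite [X in _ -> _ + X = _](eq_bigr l) => [|j]; last exact: l'E.
  rewrite /l' eqxx; lia.
rewrite -(IH l' l'_sum) (bigD1 i) //= [in RHS](bigD1 i) //=.
rewrite [X in _ = _ * (_ * (_ * X))](eq_bigr (fun j => (l j)`!)) => [|j /l'E -> //].
rewrite /l' eqxx -(prednK li) factS subn1 /=; lia.
Qed.

Lemma multinomE b s (l : 'I_s -> nat) : \sum_i l i = b -> multinom b l = card_profile b l.
Proof.
move=> l_sum; rewrite /multinom -(card_profile_fact l_sum) mulnK //.
by rewrite prodn_gt0 // => i; rewrite fact_gt0.
Qed.

Lemma sum_ffun_by_profile b s (W M : 'I_s -> nat) (w : nat) :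
  \sum_(h : {ffun 'I_b -> 'I_s}) (\sum_j W (h j) == w) * \prod_j M (h j) =
  \sum_(l : {ffun 'I_s -> 'I_b.+1} |
          (\sum_i (l i : nat) == b) && (\sum_i (l i : nat) * W i == w))
     multinom b (fun i => (l i : nat)) * \prod_i M i ^ (l i : nat).
Proof.
pose pf (h : {ffun 'I_b -> 'I_s}) := [ffun i => inord (profile h i) : 'I_b.+1].
have pfE h i : pf h i = profile h i :> nat by rewrite ffunE inordK // ltnS profile_le.
rewrite (partition_big pf xpredT) // [RHS]big_mkcond /=; apply: eq_bigr => l _.
rewrite (eq_bigr (fun=> (\sum_i (l i : nat) * W i == w) * \prod_i M i ^ l i)); last first.
  move=> h /eqP E; rewrite -E sum_profile prod_profile.
  by congr (nat_of_bool (_ == _) * _); apply: eq_bigr => i _; rewrite pfE.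
rewrite sum_nat_const (_ : #|_| = card_profile b (fun i => l i)); last first.
  apply: eq_card => h; rewrite inE; change ((pf h == l) = [forall i, profile h i == l i]).
  apply/eqP/forallP => [<- i|prof_l]; first by rewrite pfE.
  by apply/ffunP => i; apply: val_inj; rewrite /= pfE; apply/eqP.
have [l_sum|l_sum] := eqVneq (\sum_i (l i : nat)) b.
  by rewrite /= (multinomE l_sum); case: (_ == w); rewrite /= ?mul1n ?mul0n ?muln0.
suff -> : card_profile b (fun i => l i) = 0 by [].
apply/eqP; rewrite cards_eq0; apply/eqP/setP => h; rewrite !inE.
apply/negbTE; apply: contra l_sum => /forallP prof_l.
apply/eqP; rewrite -[RHS](sum_profile1 h).
by apply: eq_bigr => i _; apply/esym/eqP/prof_l.
Qed.

Section WeightClasses.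

Variables (Y : finType) (g : Y -> nat) (ws : seq nat).
Hypotheses (ws_uniq : uniq ws) (mem_ws : forall v, (v \in ws) = (0 < #|[set y | g y == v]|)).

Let s := size ws.
Let class (i : 'I_s) := #|[set y | g y == nth 0 ws i]|.

Let index_lt y : index (g y) ws < s.
Proof. by rewrite index_mem mem_ws (cardD1 y) inE eqxx. Qed.

Let class_of y : 'I_s := Ordinal (index_lt y).

Let nth_class_of y : nth 0 ws (class_of y) = g y.
Proof. by rewrite nth_index // mem_ws (cardD1 y) inE eqxx. Qed.

Let class_ofE y i : (class_of y == i) = (g y == nth 0 ws i).
Proof.
apply/eqP/eqP => [<-|E]; first by rewrite nth_class_of.
by apply: val_inj; rewrite /= E index_uniq.
Qed.

Lemma card_ffun_sum_classes b w :
  #|[set f : {ffun 'I_b -> Y} | \sum_j g (f j) == w]| =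
  \sum_(h : {ffun 'I_b -> 'I_s}) (\sum_j nth 0 ws (h j) == w) * \prod_j class (h j).
Proof.
rewrite cards_sum.
rewrite (partition_big (fun f : {ffun 'I_b -> Y} => [ffun j => class_of (f j)]) xpredT) //=.
apply: eq_bigr => h _; rewrite big_mkcond /=.
transitivity (\sum_(f : {ffun 'I_b -> Y})
    (\sum_j nth 0 ws (h j) == w) * \prod_j (class_of (f j) == h j : nat)).
  apply: eq_bigr => f _; case: eqP => [<-|ne].
    rewrite [X in _ * X]big1 => [|j _]; last by rewrite ffunE eqxx.
    rewrite muln1; congr (nat_of_bool (_ == _)).
    by apply: eq_bigr => j _; rewrite ffunE nth_class_of.
  suff [j /negbTE fj_neq] : exists j, class_of (f j) != h j.
    by rewrite [X in _ * X](bigD1 j) //= fj_neq mul0n muln0.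
  apply/existsP; apply: contra_notT ne => /existsPn fh_eq; apply/ffunP => j.
  by rewrite ffunE; apply/eqP; move: (fh_eq j); rewrite negbK.
rewrite -big_distrr /= -(bigA_distr_bigA (fun j y => (class_of y == h j : nat))) /=.
congr muln; apply: eq_bigr => j _.
by rewrite /class cards_sum; apply: eq_bigr => y _; rewrite class_ofE.
Qed.

Lemma card_ffun_weight b w :
  #|[set f : {ffun 'I_b -> Y} | \sum_j g (f j) == w]| =
  \sum_(l : {ffun 'I_(size ws) -> 'I_b.+1} |
          (\sum_i (l i : nat) == b) && (\sum_i (l i : nat) * nth 0 ws i == w))
     multinom b (fun i => (l i : nat)) *
     \prod_(i < size ws) #|[set y | g y == nth 0 ws i]| ^ (l i : nat).
Proof. by rewrite card_ffun_sum_classes (sum_ffun_by_profile _ (fun i => nth 0 ws i)). Qed.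

End WeightClasses.

Local Open Scope ring_scope.

Section PrimeFieldEmbedding.

Variables (F : fieldType) (p : nat) (chF : p \in [pchar F]).

Definition Fp_embed of p \in [pchar F] := fun x : 'F_p => (x : nat)%:R : F.

Local Notation embed := (Fp_embed chF).

Lemma Fp_embed_nat n : embed n%:R = n%:R.
Proof. by rewrite /Fp_embed val_Fp_nat ?(pcharf_prime chF) // (GRing.natr_mod_pchar chF). Qed.

Lemma Fp_embed_is_zmod_morphism : zmod_morphism embed.
Proof.
move=> x y; rewrite -[x]natr_Zp -[y]natr_Zp.
have yp : ((y : nat) <= p)%N by rewrite ltnW // -{2}(Fp_cast (pcharf_prime chF)).
have -> : (x : nat)%:R - (y : nat)%:R = (x + (p - y))%N%:R :> 'F_p.
  by rewrite natrD natrB // pchar_Fp_0 ?(pcharf_prime chF) // sub0r.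
by rewrite !Fp_embed_nat natrD natrB // (GRing.pcharf0 chF) sub0r.
Qed.

Lemma Fp_embed_is_monoid_morphism : monoid_morphism embed.
Proof.
split=> [|x y]; first by rewrite -(natr_Zp 1) Fp_embed_nat.
by rewrite -[x]natr_Zp -[y]natr_Zp -natrM !Fp_embed_nat natrM.
Qed.

HB.instance Definition _ := GRing.isZmodMorphism.Build _ _ embed Fp_embed_is_zmod_morphism.
HB.instance Definition _ := GRing.isMonoidMorphism.Build _ _ embed Fp_embed_is_monoid_morphism.

End PrimeFieldEmbedding.

Notation Fp_eval chF x := (horner_morph (fun a => mulrC x (Fp_embed chF a))).

Section Frobenius.

Variables (R : fieldType) (p : nat) (chR : p \in [pchar R]).

Lemma pchar_nat_expn i : [pchar R].-nat (p ^ i)%N.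
Proof.
by rewrite (eq_pnat _ (pcharf_eq chR)) pnatX pnat_id ?(pcharf_prime chR).
Qed.

Lemma exprD_pchar_expn i (x y : R) : (x + y) ^+ (p ^ i) = x ^+ (p ^ i) + y ^+ (p ^ i).
Proof. exact: exprDn_pchar (pchar_nat_expn i). Qed.

Lemma exprB_pchar_expn i (x y : R) : (x - y) ^+ (p ^ i) = x ^+ (p ^ i) - y ^+ (p ^ i).
Proof. by rewrite exprD_pchar_expn (exprNn_pchar _ (pchar_nat_expn i)). Qed.

Lemma expr_sum_pchar_expn i (I : Type) (r : seq I) (P : pred I) (f : I -> R) :
  (\sum_(j <- r | P j) f j) ^+ (p ^ i) = \sum_(j <- r | P j) f j ^+ (p ^ i).
Proof.
apply: (big_morph (fun x => x ^+ (p ^ i))) => [x y|]; first exact: exprD_pchar_expn.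
by rewrite expr0n expn_eq0 gtn_eqF ?(prime_gt0 (pcharf_prime chR)).
Qed.

Lemma Fp_eval_expn P (x : R) i : Fp_eval chR x P ^+ (p ^ i) = Fp_eval chR (x ^+ (p ^ i)) P.
Proof.
rewrite /horner_morph !horner_coef expr_sum_pchar_expn; apply: eq_bigr => j _.
rewrite exprMn coef_map -!exprM mulnC; congr (_ * _).
elim: i => [|i IH]; first by rewrite expn0 expr1.
rewrite expnSr exprM IH /Fp_embed -pFrobenius_autE.
by rewrite (pFrobenius_aut_nat chR).
Qed.

End Frobenius.

Lemma expf_pred_eq1 (R : fieldType) n (x : R) :
  (0 < n)%N -> x ^+ n = x -> x != 0 -> x ^+ n.-1 = 1.
Proof. by move=> n_gt0 xn nz; apply: (mulfI nz); rewrite mulr1 -exprS prednK. Qed.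

Section FixedSubfieldEmbedding.

Variables (p a : nat) (F F0 : finFieldType).
Variables (chF : p \in [pchar F]) (chF0 : p \in [pchar F0]) (eta : F).
Hypotheses (cardF0 : #|F0| = (p ^ a)%N) (eta_prim : (p ^ a).-1.-primitive_root eta).
Hypothesis a_gt0 : (0 < a)%N.

Local Notation q := (p ^ a)%N.
Local Notation eval := (Fp_eval chF eta).

Let q_gt1 : (1 < q)%N.
Proof. by rewrite -(expn0 p) ltn_exp2l ?prime_gt1 ?(pcharf_prime chF). Qed.

Lemma eta_expq : eta ^+ q = eta.
Proof. by rewrite -(prednK (ltnW q_gt1)) exprS (prim_expr_order eta_prim) mulr1. Qed.

Lemma eval_expq P : eval P ^+ q = eval P.
Proof. by rewrite Fp_eval_expn eta_expq. Qed.

Let eval_XqX : eval ('X^q - 'X) = 0.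
Proof. by rewrite rmorphB rmorphXn /= horner_morphX eta_expq subrr. Qed.

Lemma eval_kernel_min : exists P : {poly 'F_p},
  [/\ P != 0, eval P = 0 & forall Q, Q != 0 -> eval Q = 0 -> (size P <= size Q)%N].
Proof.
pose ker_size n := [exists v : 'rV['F_p]_n, (rVpoly v != 0) && (eval (rVpoly v) == 0)].
have ker_sizeP Q : Q != 0 -> eval Q = 0 -> ker_size (size Q).
  by move=> nzQ evQ; apply/existsP; exists (poly_rV Q); rewrite poly_rV_K // nzQ evQ eqxx.
have XqX_neq0 : 'X^q - 'X != 0 :> {poly 'F_p}.
  rewrite subr_eq0; apply/eqP => /(congr1 (fun P : {poly 'F_p} => size P)).
  by rewrite size_polyXn size_polyX => -[q1]; move: q_gt1; rewrite q1.
have [n /existsP[v /andP[nzv /eqP evv]] n_min] :=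
  ex_minnP (ex_intro ker_size _ (ker_sizeP _ XqX_neq0 eval_XqX)).
exists (rVpoly v); split => // Q nzQ evQ.
exact: leq_trans (size_poly _ _) (n_min _ (ker_sizeP _ nzQ evQ)).
Qed.

Lemma eval_kernel_principal : exists P : {poly 'F_p},
  [/\ (1 < size P)%N, eval P = 0 & forall Q, eval Q = 0 -> P %| Q].
Proof.
have [P [nzP evP P_min]] := eval_kernel_min; exists P; split => //.
  rewrite ltnNge; apply/negP => /size1_polyC EP; move: evP nzP.
  by rewrite EP horner_morphC => /eqP; rewrite fmorph_eq0 => /eqP ->; rewrite eqxx.
move=> Q evQ; apply/modp_eq0P/eqP; apply: contraT => nzR.
have evR : eval (Q %% P) = 0.
  by move: evQ; rewrite {1}(divp_eq Q P) rmorphD rmorphM /= evP mulr0 add0r.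
by have := P_min _ nzR evR; rewrite leqNgt ltn_modp nzP.
Qed.

(* The generator of the kernel of [eval] divides X^q - X, which splits into
   linear factors over F0; a root xi of it gives a map F_p[eta] -> F0. *)
Lemma exists_compatible_root : exists xi : F0,
  forall Q : {poly 'F_p}, eval Q = 0 -> Fp_eval chF0 xi Q = 0.
Proof.
have [P [szP evP P_dvd]] := eval_kernel_principal.
have := P_dvd _ eval_XqX; rewrite -(dvdp_map (Fp_embed chF0)) rmorphB /= map_polyXn map_polyX.
rewrite -cardF0 finField_genPoly => /dvdp_prod_XsubC[m Em].
have := eqp_size Em; rewrite size_prod_XsubC size_map_poly.
case Es: (mask m _) => [|x s] /= => [E|_]; first by rewrite E in szP.
exists x => Q /P_dvd/dvdpP[R ->].
rewrite rmorphM /=; apply/eqP; rewrite mulf_eq0; apply/orP; right.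
by rewrite /horner_morph -rootE (eqp_root Em) root_prod_XsubC Es mem_head.
Qed.

Section CompatibleRoot.

Variable xi : F0.
Hypothesis xi_compat : forall Q, eval Q = 0 -> Fp_eval chF0 xi Q = 0.

Local Notation eval0 := (Fp_eval chF0 xi).

Lemma eval0_neq0 Q : eval Q != 0 -> eval0 Q != 0.
Proof.
move=> nz; have E := expf_pred_eq1 (ltnW q_gt1) (eval_expq Q) nz.
have /xi_compat/eqP : eval (Q ^+ q.-1 - 1) = 0 by rewrite rmorphB rmorphXn rmorph1 /= E subrr.
rewrite rmorphB rmorphXn rmorph1 /= subr_eq0; apply: contraTneq => ->.
by rewrite expr0n -(subn1 q) subn_eq0 leqNgt q_gt1 eq_sym oner_eq0.
Qed.

(* A nonzero x with x^q = x is a power of eta, hence a polynomial in eta.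
   For other x, [rep x] is junk; [embed_fixed] is only meaningful on the
   subfield fixed by x |-> x^q. *)
Definition rep (x : F) : {poly 'F_p} :=
  if x == 0 then 0 else 'X^(odflt 0%N (omap val [pick i : 'I_q.-1 | eta ^+ i == x])).

Lemma eval_rep x : x ^+ q = x -> eval (rep x) = x.
Proof.
move=> xq; rewrite /rep; case: eqP => [->|/eqP nz]; first by rewrite rmorph0.
case: pickP => [i /eqP Ei|none] /=; first by rewrite rmorphXn /= horner_morphX.
have [i Ei] := prim_rootP eta_prim (expf_pred_eq1 (ltnW q_gt1) xq nz).
by have := none i; rewrite Ei eqxx.
Qed.

Definition embed_fixed x := eval0 (rep x).

Local Notation psi := embed_fixed.

Lemma embed_fixed_eval Q : psi (eval Q) = eval0 Q.
Proof.
have /xi_compat/eqP : eval (rep (eval Q) - Q) = 0.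
  by rewrite rmorphB /= eval_rep ?subrr ?eval_expq.
by rewrite rmorphB subr_eq0 => /eqP.
Qed.

Lemma embed_fixedD x y : x ^+ q = x -> y ^+ q = y -> psi (x + y) = psi x + psi y.
Proof.
by move=> xq yq; rewrite -(eval_rep xq) -(eval_rep yq) -rmorphD !embed_fixed_eval rmorphD.
Qed.

Lemma embed_fixedB x y : x ^+ q = x -> y ^+ q = y -> psi (x - y) = psi x - psi y.
Proof.
by move=> xq yq; rewrite -(eval_rep xq) -(eval_rep yq) -rmorphB !embed_fixed_eval rmorphB.
Qed.

Lemma embed_fixedM x y : x ^+ q = x -> y ^+ q = y -> psi (x * y) = psi x * psi y.
Proof.
by move=> xq yq; rewrite -(eval_rep xq) -(eval_rep yq) -rmorphM !embed_fixed_eval rmorphM.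
Qed.

Lemma embed_fixedX x n : x ^+ q = x -> psi (x ^+ n) = psi x ^+ n.
Proof. by move=> xq; rewrite -(eval_rep xq) -rmorphXn !embed_fixed_eval rmorphXn. Qed.

Lemma embed_fixed0 : psi 0 = 0.
Proof. by rewrite -(rmorph0 eval) embed_fixed_eval rmorph0. Qed.

Lemma embed_fixed1 : psi 1 = 1.
Proof. by rewrite -(rmorph1 eval) embed_fixed_eval rmorph1. Qed.

Lemma embed_fixed_eq0 x : x ^+ q = x -> (psi x == 0) = (x == 0).
Proof.
move=> xq; apply/idP/idP => [|/eqP ->]; last by rewrite embed_fixed0.
by apply: contraLR => nz; apply: eval0_neq0; rewrite eval_rep.
Qed.

Lemma embed_fixed_inj x y : x ^+ q = x -> y ^+ q = y -> psi x = psi y -> x = y.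
Proof.
move=> xq yq E; apply/eqP; rewrite -subr_eq0 -embed_fixed_eq0 ?embed_fixedB ?E ?subrr //.
by rewrite exprB_pchar_expn // xq yq.
Qed.

Lemma embed_fixed_trace x : x ^+ q = x -> (trace p a (psi x) == 0) = (trace p a x == 0).
Proof.
move=> xq; rewrite /trace.
have fixed_sum (r : seq 'I_a) : let s := \sum_(i <- r) x ^+ (p ^ i) in
    s ^+ q = s /\ psi s = \sum_(i <- r) psi x ^+ (p ^ i).
  elim: r => [|i r [sq ps]] /=.
    by rewrite !big_nil expr0n gtn_eqF ?embed_fixed0 // ltnW.
  have xiq : (x ^+ (p ^ i)) ^+ q = x ^+ (p ^ i) by rewrite exprAC xq.
  by rewrite !big_cons exprD_pchar_expn // xiq sq embed_fixedD // embed_fixedX // ps.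
by have [sq <-] := fixed_sum (index_enum 'I_a); rewrite embed_fixed_eq0.
Qed.

Lemma embed_fixed_prim z n : z ^+ q = z -> n.-primitive_root z -> n.-primitive_root (psi z).
Proof.
move=> zq pz; have n_gt0 := prim_order_gt0 pz.
have zn : psi z ^+ n = 1 by rewrite -embed_fixedX // (prim_expr_order pz) embed_fixed1.
have [m pm mn] := prim_order_exists n_gt0 zn.
have /eqP : z ^+ m = 1.
  apply: embed_fixed_inj; first by rewrite exprAC zq.
    by rewrite expr1n.
  by rewrite embed_fixedX // embed_fixed1 (prim_expr_order pm).
rewrite -(prim_order_dvd pz) => nm.
by have /eqP -> : n == m by rewrite eqn_dvd nm mn.
Qed.

End CompatibleRoot.

End FixedSubfieldEmbedding.

Lemma fixed_subfield_embedding (p a : nat) (F F0 : finFieldType) (eta : F) :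
  p \in [pchar F] -> p \in [pchar F0] -> #|F0| = (p ^ a)%N ->
  (p ^ a - 1)%N.-primitive_root eta -> (0 < a)%N ->
  let fixed x := x ^+ (p ^ a) = x in
  exists psi : F -> F0,
  [/\ forall x y, fixed x -> fixed y -> psi x = psi y -> x = y,
      forall x y, fixed x -> fixed y -> psi (x * y) = psi x * psi y,
      forall x n, fixed x -> psi (x ^+ n) = psi x ^+ n,
      forall x, fixed x -> (trace p a (psi x) == 0) = (trace p a x == 0)
    & forall z n, fixed z -> n.-primitive_root z -> n.-primitive_root (psi z)].
Proof.
move=> chF chF0 cardF0; rewrite subn1 => eta_prim a_gt0 fixed.
have [xi xi_compat] := exists_compatible_root chF chF0 cardF0 eta_prim a_gt0.
exists (embed_fixed a chF0 eta xi); split.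
- exact: (embed_fixed_inj eta_prim a_gt0 xi_compat).
- exact: embed_fixedM xi_compat.
- exact: embed_fixedX xi_compat.
- exact: (embed_fixed_trace eta_prim a_gt0 xi_compat).
- exact: (embed_fixed_prim eta_prim a_gt0 xi_compat).
Qed.

Section RelativeTrace.

Variables (p a b : nat) (F : finFieldType) (chF : p \in [pchar F]).
Hypotheses (cardF : #|F| = (p ^ (a * b))%N) (b_gt0 : (0 < b)%N).

Definition rtrace (y : F) := \sum_(r < b) y ^+ (p ^ (a * r)).

Lemma expr_fixed_expn (z : F) r : z ^+ (p ^ a) = z -> z ^+ (p ^ (a * r)) = z.
Proof.
move=> zq; elim: r => [|r IH]; first by rewrite muln0 expn0 expr1.
by rewrite mulnS expnD exprM zq IH.
Qed.

Lemma rtrace_fixed y : rtrace y ^+ (p ^ a) = rtrace y.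
Proof.
rewrite /rtrace expr_sum_pchar_expn //.
rewrite (eq_bigr (fun r : 'I_b => y ^+ (p ^ (a * r.+1)))) => [|r _]; last first.
  by rewrite -exprM -expnD mulnS addnC.
rewrite -(prednK b_gt0) big_ord_recr [RHS]big_ord_recl /= prednK //.
by rewrite -cardF expf_card muln0 expn0 expr1 addrC.
Qed.

Lemma rtraceB y1 y2 : rtrace (y1 - y2) = rtrace y1 - rtrace y2.
Proof. by rewrite /rtrace -sumrB; apply: eq_bigr => r _; rewrite exprB_pchar_expn. Qed.

Lemma rtraceZ y z : z ^+ (p ^ a) = z -> rtrace (y * z) = rtrace y * z.
Proof.
move=> zq; rewrite /rtrace mulr_suml.
by apply: eq_bigr => r _; rewrite exprMn (expr_fixed_expn r zq).
Qed.

Lemma trace_rtrace y : trace p (a * b) y = trace p a (rtrace y).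
Proof.
rewrite /trace /rtrace.
rewrite (eq_bigr (fun t : 'I_a => \sum_(r < b) y ^+ (p ^ (a * r + t)))) => [|t _]; last first.
  by rewrite expr_sum_pchar_expn //; apply: eq_bigr => r _; rewrite -exprM -expnD.
rewrite exchange_big /= -(big_mkord xpredT (fun i => y ^+ (p ^ i))) mulnC.
rewrite big_nat_mul /= big_mkord; apply: eq_bigr => r _.
rewrite -{1}(add0n (r * a)%N) big_addn mulSn addnK big_mkord.
by apply: eq_bigr => t _; rewrite mulnC addnC.
Qed.

(* With q = p^a, the conjugates theta^(q^r), r < b, are distinct, so the
   Vandermonde system \sum_r delta^(q^r) (theta^(q^r))^j = 0 (j < b) forces
   delta = 0: combining its equations with the coefficients of
   Q = \prod_(0 < r < b) ('X - theta^(q^r)) eliminates every unknown but delta. *)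
Lemma rtrace_powers_eq0 (theta delta : F) :
  (forall r, (0 < r < b)%N -> theta ^+ (p ^ (a * r)) != theta) ->
  (forall j : 'I_b, rtrace (delta * theta ^+ j) = 0) -> delta = 0.
Proof.
move=> theta_conj rtrace0.
pose t r := theta ^+ (p ^ (a * r)); pose g r := delta ^+ (p ^ (a * r)).
pose Q := \prod_(r <- iota 1 b.-1) ('X - (t r)%:P).
have sizeQ : size Q = b by rewrite size_prod_XsubC size_iota prednK.
have rtraceE (j : 'I_b) : rtrace (delta * theta ^+ j) = \sum_(r < b) g r * t r ^+ j.
  by apply: eq_bigr => r _; rewrite exprMn exprAC.
have sum_gQ : \sum_(r < b) g r * Q.[t r] = 0.
  transitivity (\sum_(r < b) \sum_(i < b) Q`_i * (g r * t r ^+ i)).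
    apply: eq_bigr => r _; rewrite horner_coef sizeQ mulr_sumr.
    by apply: eq_bigr => i _; rewrite mulrCA.
  by rewrite exchange_big big1 // => i _; rewrite -mulr_sumr -rtraceE rtrace0 mulr0.
have Q_root r : r \in iota 1 b.-1 -> Q.[t r] = 0.
  move=> r_in; rewrite horner_prod; apply/eqP; rewrite prodf_seq_eq0.
  by apply/hasP; exists r => //=; rewrite hornerXsubC subrr.
have Q_theta : Q.[t 0%N] != 0.
  rewrite horner_prod prodf_seq_neq0; apply/allP => r.
  rewrite mem_iota => /andP[r_gt0 r_lt] /=.
  rewrite hornerXsubC subr_eq0 eq_sym /t muln0 expn0 expr1; apply: theta_conj.
  by rewrite r_gt0 -(prednK b_gt0) -add1n.
move: sum_gQ; rewrite -(prednK b_gt0) big_ord_recl big1 ?addr0 => [|r _]; last first.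
  by rewrite Q_root ?mulr0 // lift0 mem_iota /= ltnS ltn_ord.
by move/eqP; rewrite mulf_eq0 (negbTE Q_theta) orbF /g muln0 expn0 expr1 => /eqP.
Qed.

End RelativeTrace.

Lemma card_prim_root_powers (E : finFieldType) c (rho : E) (P : pred E) :
  c.-primitive_root rho ->
  #|[set i : 'I_c | P (rho ^+ i)]| = #|[set z : E | (z ^+ c == 1) && P z]|.
Proof.
move=> rho_prim; have pow_inj : injective (fun i : 'I_c => rho ^+ i).
  by move=> i j /eqP; rewrite (eq_prim_root_expr rho_prim) !modn_small // => /eqP/val_inj.
rewrite -(card_imset _ pow_inj); apply: eq_card => z; rewrite !inE.
apply/imsetP/andP => [[i]|[/eqP zc Pz]]; last first.
  by have [i Ei] := prim_rootP rho_prim zc; exists i; rewrite ?inE -Ei.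
by rewrite inE => Pi ->; rewrite -exprM mulnC exprM (prim_expr_order rho_prim) expr1n.
Qed.

Lemma code_len_cofactor p m n :
  (1 < p ^ m)%N -> (n %| p ^ m - 1)%N -> code_len p m ((p ^ m - 1) %/ n) = n.
Proof.
rewrite -subn_gt0 => N_gt0 n_dvd.
have n_gt0 : (0 < n)%N by rewrite lt0n; apply: contraTneq n_dvd => ->; rewrite dvd0n -lt0n.
by rewrite /code_len -{1}(divnK n_dvd) mulKn // divn_gt0 // dvdn_leq.
Qed.

Section IrreducibleCode.

Variables (p a b c : nat) (F F0 : finFieldType) (omega : F) (omega0 : F0).
Hypotheses (p_prime : prime p) (a_gt0 : (0 < a)%N).
Hypotheses (b_gt0 : (0 < b)%N) (c_gt0 : (0 < c)%N).
Hypotheses (c_dvd : (c %| p ^ a - 1)%N) (bc_dvd : (b * c %| p ^ (a * b) - 1)%N).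
Hypothesis bc_primitive : forall t, (0 < t < a * b)%N -> ~~ (b * c %| p ^ t - 1)%N.
Hypotheses (cardF : #|F| = (p ^ (a * b))%N) (cardF0 : #|F0| = (p ^ a)%N).
Hypotheses (omega_prim : (p ^ (a * b) - 1)%N.-primitive_root omega)
           (omega0_prim : (p ^ a - 1)%N.-primitive_root omega0).

Local Notation q := (p ^ a)%N.
Local Notation fixed x := (x ^+ q = x).
Local Notation k := ((p ^ (a * b) - 1) %/ (b * c))%N.
Local Notation u := ((p ^ a - 1) %/ c)%N.

Variable psi : F -> F0.
Hypotheses (psi_inj : forall x y, fixed x -> fixed y -> psi x = psi y -> x = y)
           (psiM : forall x y, fixed x -> fixed y -> psi (x * y) = psi x * psi y)
           (psiX : forall x n, fixed x -> psi (x ^+ n) = psi x ^+ n)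
           (psi_trace : forall x, fixed x -> (trace p a (psi x) == 0) = (trace p a x == 0))
           (psi_prim : forall z n, fixed z -> n.-primitive_root z -> n.-primitive_root (psi z)).

Let chF : p \in [pchar F] := card_finPcharP cardF p_prime.

Let theta := omega ^+ k.
Let zeta := theta ^+ b.

Let theta_prim : (b * c)%N.-primitive_root theta.
Proof. by have := dvdn_prim_root omega_prim bc_dvd. Qed.

Let zeta_prim : c.-primitive_root zeta.
Proof. by have := dvdn_prim_root theta_prim (dvdn_mull b (dvdnn c)); rewrite mulnK. Qed.

Let q_gt1 : (1 < q)%N.
Proof. by rewrite -(expn0 p) ltn_exp2l ?prime_gt1. Qed.

Let pab_gt1 : (1 < p ^ (a * b))%N.
Proof. by rewrite -(expn0 p) ltn_exp2l ?prime_gt1 ?muln_gt0 ?a_gt0. Qed.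

Let zeta_fixed : fixed zeta.
Proof.
rewrite -[q](subnK (ltnW q_gt1)) addn1 exprS; case/dvdnP: c_dvd => r ->.
by rewrite mulnC exprM (prim_expr_order zeta_prim) expr1n mulr1.
Qed.

Let zetaX_fixed i : fixed (zeta ^+ i).
Proof. by rewrite exprAC zeta_fixed. Qed.

Let zeta0_prim : c.-primitive_root (omega0 ^+ u).
Proof. by have := dvdn_prim_root omega0_prim c_dvd. Qed.

Lemma cw_weight_split g :
  cw_weight p (a * b) k omega g =
  (\sum_(j < b)
     #|[set i : 'I_c | (trace p a (zeta ^+ i * rtrace p a b (g * theta ^+ j)) != 0)%R]|)%N.
Proof.
rewrite /cw_weight (code_len_cofactor pab_gt1 bc_dvd) cards_sum.
rewrite -(big_mkord xpredT (fun i => (trace p (a * b) (g * omega ^+ (k * i)) != 0 : nat))).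
rewrite [in X in index_iota _ X]mulnC big_nat_mul /=.
under eq_bigr => i _ do rewrite -{1}(add0n (i * b)%N) big_addn mulSn addnK.
rewrite exchange_big /= big_mkord; apply: eq_bigr => j _.
rewrite cards_sum -(big_mkord xpredT
  (fun i => (trace p a (zeta ^+ i * rtrace p a b (g * theta ^+ j)) != 0 : nat))).
apply: eq_bigr => i _.
have -> : omega ^+ (k * (j + i * b)) = theta ^+ j * zeta ^+ i.
  by rewrite -!exprM -exprD; congr (_ ^+ _); nia.
by rewrite mulrA trace_rtrace // rtraceZ // mulrC.
Qed.

Lemma cw_weight_embed x : fixed x ->
  cw_weight p a u omega0 (psi x) = #|[set i : 'I_c | trace p a (zeta ^+ i * x) != 0]|.
Proof.
move=> x_fixed; rewrite /cw_weight (code_len_cofactor q_gt1 c_dvd).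
transitivity #|[set i : 'I_c | trace p a (psi x * (omega0 ^+ u) ^+ i) != 0]|.
  by apply: eq_card => i; rewrite !inE -exprM.
rewrite (card_prim_root_powers (fun z => trace p a (psi x * z) != 0) zeta0_prim).
rewrite -(card_prim_root_powers _ (psi_prim zeta_fixed zeta_prim)).
apply: eq_card => i; rewrite !inE -psiX // -psiM // psi_trace; first by rewrite mulrC.
by rewrite exprMn zetaX_fixed x_fixed.
Qed.

Let theta_conj r : (0 < r < b)%N -> theta ^+ (p ^ (a * r)) != theta.
Proof.
case/andP=> r_gt0 r_lt_b; rewrite -{2}(expr1 theta) (eq_prim_root_expr theta_prim).
rewrite eqn_mod_dvd ?expn_gt0 ?prime_gt0 //; apply: bc_primitive.
by rewrite muln_gt0 a_gt0 r_gt0 ltn_pmul2l.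
Qed.

Definition rtrace_coords (g : F) : {ffun 'I_b -> F0} :=
  [ffun j : 'I_b => psi (rtrace p a b (g * theta ^+ j))].

Lemma rtrace_coords_inj : injective rtrace_coords.
Proof.
move=> g1 g2 E; apply/eqP; rewrite -subr_eq0; apply/eqP.
apply: (rtrace_powers_eq0 b_gt0 theta_conj) => j.
have Ej : rtrace p a b (g1 * theta ^+ j) = rtrace p a b (g2 * theta ^+ j).
  apply: psi_inj; rewrite ?rtrace_fixed //.
  by have := congr1 (fun f : {ffun 'I_b -> F0} => f j) E; rewrite !ffunE.
by rewrite mulrBl rtraceB // Ej subrr.
Qed.

Lemma cw_weight_rtrace_coords g :
  cw_weight p (a * b) k omega g = (\sum_j cw_weight p a u omega0 (rtrace_coords g j))%N.
Proof.
rewrite cw_weight_split; apply: eq_bigr => j _.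
by rewrite ffunE cw_weight_embed // rtrace_fixed.
Qed.

Lemma freq_card_ffun w :
  freq p (a * b) k omega w =
  #|[set f : {ffun 'I_b -> F0} | \sum_j cw_weight p a u omega0 (f j) == w]|.
Proof.
have card_eq : #|F| = #|{ffun 'I_b -> F0}|.
  by rewrite card_ffun card_ord cardF cardF0 -expnM.
rewrite -(on_card_preimset (onW_bij _ (inj_card_bij rtrace_coords_inj _))) ?card_eq //.
by apply: eq_card => g; rewrite !inE cw_weight_rtrace_coords.
Qed.

End IrreducibleCode.

Local Close Scope ring_scope.

Theorem theorem2p2
  (p a b c : nat)
  (F : finFieldType) (F0 : finFieldType) (omega : F) (omega0 : F0)
  (ws : seq nat) (w : nat) :
  prime p -> (0 < a)%N -> (1 < b)%N -> (0 < c)%N ->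
  primitive_divisor p a c -> (p - 1 %| c)%N ->
  primitive_divisor p (a * b) (b * c) ->
  #|F| = (p ^ (a * b))%N -> #|F0| = (p ^ a)%N ->
  ((p ^ (a * b) - 1)%N.-primitive_root omega)%R ->
  ((p ^ a - 1)%N.-primitive_root omega0)%R ->
  let m := (a * b)%N in
  let n := (b * c)%N in
  let u := ((p ^ a - 1) %/ c)%N in
  let k := ((p ^ m - 1) %/ n)%N in
  let A0 := freq p a u omega0 in
  uniq ws ->
  (forall v : nat, (v \in ws) = (0 < A0 v)%N) ->
  freq p m k omega w =
  (\sum_(l : {ffun 'I_(size ws) -> 'I_b.+1} |
          ((\sum_(i < size ws) (l i : nat)) == b) &&
          ((\sum_(i < size ws) (l i : nat) * nth 0 ws i) == w))
     multinom b (fun i => (l i : nat)) *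
     \prod_(i < size ws) A0 (nth 0 ws i) ^ (l i : nat))%N.
Proof.
move=> p_prime a_gt0 b_gt1 c_gt0 [c_dvd _] _ [bc_dvd bc_primitive] cardF cardF0.
move=> omega_prim omega0_prim m n u k A0 ws_uniq mem_ws.
have chF := card_finPcharP cardF p_prime; have chF0 := card_finPcharP cardF0 p_prime.
have q_dvd : (p ^ a - 1 %| p ^ (a * b) - 1)%N by rewrite expnM !subn1 dvdn_pred_predX.
have [psi [psi_inj psiM psiX psi_trace psi_prim]] :=
  fixed_subfield_embedding chF chF0 cardF0 (dvdn_prim_root omega_prim q_dvd) a_gt0.
rewrite (freq_card_ffun p_prime a_gt0 (ltnW b_gt1) c_gt0 c_dvd bc_dvd bc_primitive
  cardF cardF0 omega_prim omega0_prim psi_inj psiM psiX psi_trace psi_prim).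
exact: card_ffun_weight.
Qed.
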